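(* The region $$\mathcal{M}=\left\{(S,I)\in(\mathbb{R}_0^+)^2:\ 0\le S\le A,\ 0\le S+I\le\frac{A(\sigma+g+A)}{\sigma+g}\right\}$$ is positively flow-invariant for the impulsive system $$\dot S=S(A-S)-\beta_0 IS,\quad \dot I=\beta_0 IS-(\sigma+g)I\ (t\neq nT),\quad S(nT)=(1-p)S(nT^-),\ I(nT)=I(nT^-),\ n\in\mathbb{N}.$$
   Context: Parameters: $A\in(0,1]$, $\beta_0\ge0$, $\sigma,g\ge0$ with $\sigma+g>0$, $p\in[0,1]$, $T>0$; it is assumed that $S(t)\le A$ for all $t\ge0$. A set $\mathcal{K}$ is positively flow-invariant if every solution starting in $\mathcal{K}$ stays in $\mathcal{K}$ for all $t\ge0$. *)

From Stdlib Require Import Reals.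
From Coquelicot Require Import Coquelicot.
Open Scope R_scope.

Definition in_M (A sigma g : R) (S I : R) : Prop :=
  0 <= S /\ 0 <= I /\ S <= A /\ 0 <= S + I /\
  S + I <= A * (sigma + g + A) / (sigma + g).

(* (S, I) : R -> R is a solution on [0, +oo) of the impulsive system
     S' = S (A - S) - beta0 I S,   I' = beta0 I S - (sigma + g) I   (t <> nT),
     S(nT) = (1 - p) S(nT^-),      I(nT) = I(nT^-),   n = 1, 2, ...
   Solutions are right-continuous at the impulse times (and at t = 0),
   have left limits at the impulse times, and satisfy the ODE at every
   t > 0 which is not an impulse time. *)
Definition impulsive_solution (A beta0 sigma g p T : R) (S I : R -> R) : Prop :=
  (forall t, 0 < t -> (forall n : nat, t <> INR n * T) ->
     is_derive S t (S t * (A - S t) - beta0 * I t * S t) /\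
     is_derive I t (beta0 * I t * S t - (sigma + g) * I t)) /\
  (forall n : nat,
     filterlim S (at_right (INR n * T)) (locally (S (INR n * T))) /\
     filterlim I (at_right (INR n * T)) (locally (I (INR n * T)))) /\
  (forall n : nat, (1 <= n)%nat ->
     (exists l : R, filterlim S (at_left (INR n * T)) (locally l) /\
                    S (INR n * T) = (1 - p) * l) /\
     filterlim I (at_left (INR n * T)) (locally (I (INR n * T)))).

From Stdlib Require Import Reals Lra Lia.
From Coquelicot Require Import Coquelicot.
Open Scope R_scope.

(* Between two impulse times the solution is differentiable, and each of [-I],
   [-S] and [S + I - K], where [K = A (sigma + g + A) / (sigma + g)], stays
   nonpositive by a comparison argument: [-I] and [-S] satisfy linear equations
   [y' = c y] with [c] locally bounded above, and where [S + I > K], since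
   [0 <= S <= A],
     (S + I)' = S (A - S) - (sigma + g) I < S (A + sigma + g - S) - A (sigma + g + A) <= 0.
   At an impulse time the left limits still lie in the closed region M, and
   scaling [S] by [1 - p] keeps them there; induction over the periods concludes. *)

Lemma at_right_interval (t0 b : R) : t0 < b -> at_right t0 (fun t => t0 < t < b).
Proof.
  intros Hb. exists (mkposreal (b - t0) ltac:(lra)).
  intros t Hball Ht. change (Rabs (t - t0) < b - t0) in Hball.
  apply Rabs_def2 in Hball. lra.
Qed.

Lemma at_left_interval (a t0 : R) : a < t0 -> at_left t0 (fun t => a < t < t0).
Proof.
  intros Ha. exists (mkposreal (t0 - a) ltac:(lra)).
  intros t Hball Ht. change (Rabs (t - t0) < t0 - a) in Hball.
  apply Rabs_def2 in Hball. lra.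
Qed.

Lemma filterlim_Rplus {T : Type} {F : (T -> Prop) -> Prop} {FF : Filter F}
  (f h : T -> R) (l m : R) :
  filterlim f F (locally l) -> filterlim h F (locally m) ->
  filterlim (fun x => f x + h x) F (locally (l + m)).
Proof.
  intros Hf Hh. apply (filterlim_comp_2 f h Rplus Hf Hh (filterlim_plus l m)).
Qed.

Lemma lim_ge_of_eventually {T : Type} {F : (T -> Prop) -> Prop} {FF : ProperFilter F}
  (f : T -> R) (c l : R) :
  F (fun x => c <= f x) -> filterlim f F (locally l) -> c <= l.
Proof. intros Hev Hf. exact (filterlim_le _ f c l Hev (filterlim_const c) Hf). Qed.

Lemma lim_le_of_eventually {T : Type} {F : (T -> Prop) -> Prop} {FF : ProperFilter F}
  (f : T -> R) (c l : R) :
  F (fun x => f x <= c) -> filterlim f F (locally l) -> l <= c.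
Proof. intros Hev Hf. exact (filterlim_le f _ l c Hev Hf (filterlim_const c)). Qed.

Lemma right_continuous_of_derive (y dy : R -> R) (a b : R) :
  (forall t, a < t < b -> is_derive y t (dy t)) ->
  filterlim y (at_right a) (locally (y a)) ->
  forall t0, a <= t0 < b -> filterlim y (at_right t0) (locally (y t0)).
Proof.
  intros Hd Ha t0 Ht0.
  destruct (Req_dec t0 a) as [-> | Hne]; [exact Ha |].
  apply (filterlim_filter_le_1 y (filter_le_within _)).
  apply (ex_derive_continuous (K := R_AbsRing) (V := R_NormedModule)).
  exists (dy t0). apply Hd. lra.
Qed.

Lemma nonincreasing_of_derive_nonpos (f df : R -> R) (u v : R) :
  u <= v ->
  (forall x, u <= x <= v -> is_derive f x (df x)) ->
  (forall x, u <= x <= v -> df x <= 0) ->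
  f v <= f u.
Proof.
  intros Huv Hd Hneg.
  destruct (MVT_gen f u v df) as [c [Hc Hmvt]];
    rewrite ?Rmin_left, ?Rmax_right in * by lra.
  - intros x Hx. apply Hd. lra.
  - intros x Hx. apply continuity_pt_filterlim.
    apply (ex_derive_continuous (K := R_AbsRing) (V := R_NormedModule)).
    exists (df x). apply Hd. exact Hx.
  - specialize (Hneg c Hc). nra.
Qed.

Lemma gronwall_backward (y dy : R -> R) (L t s : R) :
  t <= s ->
  (forall x, t <= x <= s -> is_derive y x (dy x)) ->
  (forall x, t <= x <= s -> dy x <= L * y x) ->
  y s * exp (L * (t - s)) <= y t.
Proof.
  intros Hts Hd Hlin.
  set (z := fun x => y x * exp (- L * x)).
  assert (Hz : z s <= z t).
  { apply (nonincreasing_of_derive_nonpos z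
             (fun x => (dy x - L * y x) * exp (- L * x)) t s Hts).
    - intros x Hx. unfold z.
      assert (He : is_derive (fun x => exp (- L * x)) x (- L * exp (- L * x)))
        by (auto_derive; [exact I | ring]).
      replace ((dy x - L * y x) * exp (- L * x))
        with (dy x * exp (- L * x) + y x * (- L * exp (- L * x))) by ring.
      apply (is_derive_mult y _ x _ _ (Hd x Hx) He). intros; apply Rmult_comm.
    - intros x Hx. specialize (Hlin x Hx). pose proof (exp_pos (- L * x)). nra. }
  unfold z in Hz.
  assert (Hs : exp (- L * s) * exp (L * t) = exp (L * (t - s)))
    by (rewrite <- exp_plus; f_equal; ring).
  assert (Ht : exp (- L * t) * exp (L * t) = 1)
    by (rewrite <- exp_plus, <- exp_0; f_equal; ring).
  pose proof (exp_pos (L * t)).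
  apply (Rmult_le_compat_r (exp (L * t))) in Hz; [| lra].
  rewrite !Rmult_assoc, Hs, Ht, Rmult_1_r in Hz. exact Hz.
Qed.

Lemma last_nonpos_before (y : R -> R) (a t1 : R) :
  a < t1 -> y a <= 0 -> 0 < y t1 ->
  (forall t, a < t <= t1 -> continuous y t) ->
  exists t0, a <= t0 < t1 /\ y t0 <= 0 /\ forall t, t0 < t <= t1 -> 0 < y t.
Proof.
  intros Hat1 Hya Hy1 Hc.
  set (E := fun x => a <= x <= t1 /\ y x <= 0).
  destruct (completeness E) as [t0 [Hub Hlub]].
  { exists t1. intros x [Hx _]. lra. }
  { exists a. split; lra. }
  assert (Hat0 : a <= t0) by (apply Hub; split; lra).
  assert (Ht0t1 : t0 <= t1) by (apply Hlub; intros x [Hx _]; lra).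
  assert (Hpos : forall t, t0 < t <= t1 -> 0 < y t).
  { intros t Ht. destruct (Rlt_le_dec 0 (y t)) as [| Hn]; [assumption |].
    assert (t <= t0) by (apply Hub; split; lra). lra. }
  assert (Hy0 : y t0 <= 0).
  { destruct (Rle_lt_dec (y t0) 0) as [| Hn]; [assumption | exfalso].
    assert (Hne : t0 <> a) by (intros ->; lra).
    destruct (Hc t0 ltac:(lra) _ (open_gt 0 (y t0) Hn)) as [d Hd].
    assert (t0 <= t0 - d); [| pose proof (cond_pos d); lra].
    apply Hlub. intros x [Hx Hyx].
    destruct (Rle_lt_dec x (t0 - d)) as [| Hxd]; [assumption | exfalso].
    assert (Hxt0 : x <= t0) by (apply Hub; split; assumption).
    assert (0 < y x); [| lra].
    apply Hd. change (Rabs (x - t0) < d). apply Rabs_def1; lra. }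
  exists t0. split; [| split]; try assumption.
  split; [assumption |]. destruct (Req_dec t0 t1) as [-> | ]; lra.
Qed.

(* Past the last point [t0] where [y <= 0], Gronwall's inequality keeps [y]
   bounded away from [0] on a right neighbourhood of [t0], contradicting
   right-continuity at [t0]. *)
Lemma nonpos_of_local_linear_bound (y dy : R -> R) (a b : R) :
  (forall t, a < t < b -> is_derive y t (dy t)) ->
  filterlim y (at_right a) (locally (y a)) -> y a <= 0 ->
  (forall t0, a <= t0 < b -> exists L, 0 <= L /\
     at_right t0 (fun t => 0 < y t -> dy t <= L * y t)) ->
  forall t, a <= t < b -> y t <= 0.
Proof.
  intros Hd Ha Hya Hloc t1 Ht1.
  destruct (Rle_lt_dec (y t1) 0) as [| Hy1]; [assumption | exfalso].
  assert (Hat1 : a < t1) by (destruct (Req_dec t1 a) as [-> |]; lra).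
  destruct (last_nonpos_before y a t1) as [t0 [Ht0 [Hy0 Hpos]]]; try assumption.
  { intros t Ht. apply (ex_derive_continuous (K := R_AbsRing) (V := R_NormedModule)).
    exists (dy t). apply Hd. lra. }
  destruct (Hloc t0 ltac:(lra)) as [L [HL Hlin]].
  destruct (filter_and _ _ (at_right_interval t0 t1 (proj2 Ht0)) Hlin) as [d Hd0].
  set (s := t0 + Rmin d (t1 - t0) / 2).
  assert (Hmin : 0 < Rmin d (t1 - t0)) by (apply Rmin_pos; [apply cond_pos | lra]).
  pose proof (Rmin_l d (t1 - t0)). pose proof (Rmin_r d (t1 - t0)).
  assert (Hnear : forall t, t0 < t <= s ->
            t < t1 /\ is_derive y t (dy t) /\ dy t <= L * y t).
  { intros t Ht.
    assert (Hball : ball t0 d t)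
      by (change (Rabs (t - t0) < d); apply Rabs_def1; unfold s in Ht; lra).
    destruct (Hd0 t Hball (proj1 Ht)) as [Htt1 Hlt].
    split; [lra | split]; [apply Hd; lra | apply Hlt, Hpos; lra]. }
  set (m := y s * exp (L * (t0 - s))).
  assert (Hm : 0 < m)
    by (apply Rmult_lt_0_compat; [apply Hpos; unfold s; lra | apply exp_pos]).
  assert (Hlow : forall t, t0 < t <= s -> m <= y t).
  { intros t Ht.
    assert (Hgr : y s * exp (L * (t - s)) <= y t)
      by (apply (gronwall_backward y dy); try lra; intros x Hx; apply Hnear; lra).
    assert (exp (L * (t0 - s)) <= exp (L * (t - s))).
    { destruct (Req_dec L 0) as [-> | ]; [rewrite !Rmult_0_l; lra |].
      left. apply exp_increasing. nra. }
    assert (0 < y s) by (apply Hpos; unfold s; lra).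
    unfold m. nra. }
  assert (Hlim : m <= y t0).
  { apply (lim_ge_of_eventually (F := at_right t0) y).
    - apply (filter_imp (fun t => t0 < t < s)).
      + intros t Ht. apply Hlow. lra.
      + apply at_right_interval. unfold s. lra.
    - apply (right_continuous_of_derive y dy a b Hd Ha). lra. }
  lra.
Qed.

Lemma in_M_closed {T : Type} {F : (T -> Prop) -> Prop} {FF : ProperFilter F}
  (A sigma g : R) (f h : T -> R) (l m : R) :
  F (fun x => in_M A sigma g (f x) (h x)) ->
  filterlim f F (locally l) -> filterlim h F (locally m) -> in_M A sigma g l m.
Proof.
  intros HM Hf Hh. pose proof (filterlim_Rplus f h l m Hf Hh) as Hfh.
  repeat split;
    [ apply (lim_ge_of_eventually f) | apply (lim_ge_of_eventually h)
    | apply (lim_le_of_eventually f) | apply (lim_ge_of_eventually (fun x => f x + h x))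
    | apply (lim_le_of_eventually (fun x => f x + h x)) ];
    try assumption; eapply filter_imp; try exact HM;
    intros x Hx; unfold in_M in Hx; lra.
Qed.

Lemma in_M_scale_S (A sigma g q s i : R) :
  0 <= q <= 1 -> in_M A sigma g s i -> in_M A sigma g (q * s) i.
Proof. intros Hq [Hs [Hi [HsA [Hsi HK]]]]. repeat split; nra. Qed.

Section BetweenImpulses.

Variables (A beta0 sigma g a b : R) (S I : R -> R).
Hypotheses (hb : 0 <= beta0) (hsg : 0 < sigma + g).

Let dS (t : R) := S t * (A - S t) - beta0 * I t * S t.
Let dI (t : R) := beta0 * I t * S t - (sigma + g) * I t.
Let K := A * (sigma + g + A) / (sigma + g).

Hypothesis hder : forall t, a < t < b -> is_derive S t (dS t) /\ is_derive I t (dI t).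
Hypothesis hS_right : filterlim S (at_right a) (locally (S a)).
Hypothesis hI_right : filterlim I (at_right a) (locally (I a)).
Hypothesis hSA : forall t, a <= t < b -> S t <= A.
Hypothesis h0 : in_M A sigma g (S a) (I a).

Let A_nonneg : 0 <= A.
Proof. destruct h0 as [HS0 [_ [HSA0 _]]]. lra. Qed.

Lemma I_nonneg_between_impulses t : a <= t < b -> 0 <= I t.
Proof.
  intros Ht. cut (- I t <= 0); [lra |]. revert t Ht.
  apply (nonpos_of_local_linear_bound (fun t => - I t) (fun t => - dI t)).
  - intros t Ht. apply (is_derive_opp I), hder, Ht.
  - eapply filterlim_comp; [exact hI_right | apply (filterlim_opp (I a))].
  - destruct h0 as [_ [HI _]]. lra.
  - intros t0 Ht0. exists (beta0 * A).
    split; [pose proof A_nonneg; nra |].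
    apply (filter_imp (fun t => t0 < t < b)); [| apply at_right_interval; lra].
    intros t Ht Hpos.
    assert (0 <= beta0 * (A - S t)) by (assert (S t <= A) by (apply hSA; lra); nra).
    unfold dI. nra.
Qed.

Lemma S_nonneg_between_impulses t : a <= t < b -> 0 <= S t.
Proof.
  intros Ht. cut (- S t <= 0); [lra |]. revert t Ht.
  apply (nonpos_of_local_linear_bound (fun t => - S t) (fun t => - dS t)).
  - intros t Ht. apply (is_derive_opp S), hder, Ht.
  - eapply filterlim_comp; [exact hS_right | apply (filterlim_opp (S a))].
  - destruct h0 as [HS _]. lra.
  - intros t0 Ht0. exists (A + Rabs (S t0) + 1).
    split; [pose proof (Rabs_pos (S t0)); pose proof A_nonneg; lra |].
    assert (Hnear : at_right t0 (fun t => Rabs (S t - S t0) < 1))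
      by exact (right_continuous_of_derive S dS a b (fun t Ht => proj1 (hder t Ht))
                  hS_right t0 Ht0 _ (locally_ball (S t0) (mkposreal 1 Rlt_0_1))).
    apply (filter_imp (fun t => (t0 < t < b) /\ Rabs (S t - S t0) < 1));
      [| apply filter_and; [apply at_right_interval; lra | exact Hnear]].
    intros t [Ht Hball] Hpos. apply Rabs_def2 in Hball.
    assert (0 <= beta0 * I t)
      by (apply Rmult_le_pos; [| apply I_nonneg_between_impulses]; lra).
    assert (- S t0 <= Rabs (S t0)) by (rewrite <- Rabs_Ropp; apply RRle_abs).
    unfold dS. nra.
Qed.

Lemma S_plus_I_le_between_impulses t : a <= t < b -> S t + I t <= K.
Proof.
  intros Ht. cut (S t + I t - K <= 0); [lra |]. revert t Ht.
  apply (nonpos_of_local_linear_bound (fun t => S t + I t - K) (fun t => dS t + dI t)).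
  - intros t Ht. destruct (hder t Ht) as [HdS HdI].
    replace (dS t + dI t) with (minus (plus (dS t) (dI t)) zero)
      by (unfold minus, plus, opp, zero; simpl; ring).
    apply (is_derive_minus (fun t => plus (S t) (I t)) (fun _ => K)).
    + apply (is_derive_plus S I); assumption.
    + apply (is_derive_const (V := R_NormedModule)).
  - exact (filterlim_Rplus _ _ _ _ (filterlim_Rplus _ _ _ _ hS_right hI_right)
             (filterlim_const (- K))).
  - destruct h0 as [_ [_ [_ [_ HK]]]]. unfold K. lra.
  - intros t0 Ht0. exists 0. split; [lra |].
    apply (filter_imp (fun t => t0 < t < b)); [| apply at_right_interval; lra].
    intros t Ht Hpos.
    assert (HKsg : K * (sigma + g) = A * (sigma + g + A)) by (unfold K; field; lra).
    assert (0 <= S t) by (apply S_nonneg_between_impulses; lra).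
    assert (S t <= A) by (apply hSA; lra).
    assert (0 < (sigma + g) * (S t + I t - K)) by nra.
    assert (0 <= (A - S t) * (sigma + g + A)) by nra.
    unfold dS, dI. nra.
Qed.

Lemma in_M_between_impulses t : a <= t < b -> in_M A sigma g (S t) (I t).
Proof.
  intros Ht.
  pose proof (S_nonneg_between_impulses t Ht).
  pose proof (I_nonneg_between_impulses t Ht).
  pose proof (S_plus_I_le_between_impulses t Ht).
  pose proof (hSA t Ht).
  unfold in_M. fold K. repeat split; lra.
Qed.

End BetweenImpulses.

Lemma not_multiple_between (T t : R) (n : nat) :
  0 < T -> INR n * T < t < INR n * T + T -> forall m : nat, t <> INR m * T.
Proof.
  intros hT Ht m ->.
  assert (INR n < INR m /\ INR m < INR n + 1) as [Hlo Hhi] by (split; nra).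
  rewrite <- S_INR in Hhi. apply INR_lt in Hlo, Hhi. lia.
Qed.

Lemma between_consecutive_multiples (T t : R) :
  0 < T -> 0 <= t -> exists n : nat, INR n * T <= t < INR n * T + T.
Proof.
  intros hT ht.
  assert (Hq : 0 <= t / T) by (apply Rdiv_le_0_compat; lra).
  destruct (nfloor_ex (t / T) Hq) as [n Hn]. exists n.
  assert (t = t / T * T) as -> by (field; lra).
  split; nra.
Qed.

Theorem lemma1 (A beta0 sigma g p T : R)
  (hA : 0 < A) (hA1 : A <= 1) (hb : 0 <= beta0)
  (hs : 0 <= sigma) (hg : 0 <= g) (hsg : 0 < sigma + g)
  (hp0 : 0 <= p) (hp1 : p <= 1) (hT : 0 < T)
  (S I : R -> R)
  (hsol : impulsive_solution A beta0 sigma g p T S I)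
  (hSA : forall t, 0 <= t -> S t <= A)
  (h0 : in_M A sigma g (S 0) (I 0)) :
  forall t, 0 <= t -> in_M A sigma g (S t) (I t).
Proof.
  destruct hsol as [hder [hright hleft]].
  assert (Hperiod : forall n : nat, in_M A sigma g (S (INR n * T)) (I (INR n * T)) ->
            forall t, INR n * T <= t < INR n * T + T -> in_M A sigma g (S t) (I t)).
  { intros n Hn. pose proof (pos_INR n).
    apply in_M_between_impulses with beta0; try apply hright; try assumption.
    - intros t Ht. apply hder; [nra | exact (not_multiple_between T t n hT Ht)].
    - intros t Ht. apply hSA. nra. }
  assert (Hgrid : forall n : nat, in_M A sigma g (S (INR n * T)) (I (INR n * T))).
  { induction n as [| n IH].
    - simpl. rewrite Rmult_0_l. exact h0.
    - destruct (hleft (Datatypes.S n) ltac:(lia)) as [[l [Hl ->]] HI].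
      apply in_M_scale_S; [lra |].
      apply (in_M_closed (F := at_left (INR (Datatypes.S n) * T)) A sigma g S I);
        try assumption.
      rewrite S_INR. eapply filter_imp; [| apply (at_left_interval (INR n * T)); nra].
      intros t Ht. apply (Hperiod n IH). lra. }
  intros t ht. destruct (between_consecutive_multiples T t hT ht) as [n Hn].
  exact (Hperiod n (Hgrid n) t Hn).
Qed.
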